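(* Let $\Gamma$ be a distance-regular graph with valency $k\geq 3$, diameter $D\geq 3$, and distinct eigenvalues $k=\theta_0>\theta_1>\cdots>\theta_D$, such that $\theta_1\leq 1$. Then $D=3$ and $\Gamma$ is isomorphic to the complete bipartite graph $K_{k+1,k+1}$ with a perfect matching removed.
   Context: All graphs are finite, simple, undirected and connected. $\Gamma$ is distance-regular with diameter $D$ if there are integers $b_i,c_i$ such that for all vertices $x,y$ with $d(x,y)=i$, $y$ has exactly $c_i$ neighbours at distance $i-1$ from $x$ and $b_i$ neighbours at distance $i+1$ from $x$; the valency is $k=b_0$. Eigenvalues are those of the adjacency matrix. *)

From HB Require Import structures.
From mathcomp Require Import all_boot all_order all_algebra.
Set Implicit Arguments. Unset Strict Implicit. Unset Printing Implicit Defensive.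
Import Order.TTheory GRing.Theory Num.Theory.

Section Graphs.
Variable T : finType.
Variable adj : rel T.

Definition simple_graph : Prop := symmetric adj /\ irreflexive adj.
Definition connected_graph : Prop := forall x y : T, connect adj x y.

Fixpoint within (n : nat) (x y : T) : bool :=
  match n with
  | 0 => x == y
  | n'.+1 => within n' x y || [exists z, within n' x z && adj z y]
  end.

(* path distance: least n with a walk of length <= n (equals #|T| if
   y is unreachable from x, which never happens for connected graphs) *)
Definition dist (x y : T) : nat := find (fun n => within n x y) (iota 0 #|T|).

Definition diameter : nat := \max_(x : T) \max_(y : T) dist x y.

Definition distance_regular (b c : nat -> nat) : Prop :=
  forall x y : T,
    #|[set z | adj y z & dist x z + 1 == dist x y]| = c (dist x y) /\
    #|[set z | adj y z & dist x z == (dist x y).+1]| = b (dist x y).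

Definition adjmx (R : nzRingType) : 'M[R]_#|T| :=
  \matrix_(i, j) ((adj (enum_val i) (enum_val j))%:R)%R.
End Graphs.

(* K_{n,n} minus a perfect matching: vertices (i, side), i < n *)
Definition crown (n : nat) : rel ('I_n * bool) :=
  fun u v => (u.2 != v.2) && (u.1 != v.1).

Arguments crown n u v : clear implicits.

Definition graph_iso (T1 T2 : finType) (adj1 : rel T1) (adj2 : rel T2) : Prop :=
  exists f : T1 -> T2, bijective f /\ forall x y, adj2 (f x) (f y) = adj1 x y.

(* The test vector of a vertex p is s_p := k e_p + 1_{N(p)}.  For vertices x, w at
   distance 3 the vector s_x - s_w sums to zero, and eigenvectors for the eigenvalue k
   are constant (a connected regular graph has zero Dirichlet energy only on constants),
   so the bound theta <= 1 on the other eigenvalues makes the adjacency form of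
   s_x - s_w at most its squared norm.  Evaluated with the intersection numbers, this
   reads k^2 + k a_1 <= k + c_2 c_3; as c_2 <= k - 1 and c_3 <= k, it forces a_1 = 0,
   c_2 = k - 1, c_3 = k, i.e. the intersection array {k, k-1, 1; 1, k-1, k}.  Such a
   graph is bipartite with diameter 3 and every vertex has a unique antipode, so sending
   a vertex to (its antipodal class, its side) identifies it with the crown graph. *)

From Pilot Require Import Defs.
From HB Require Import structures.
From mathcomp Require Import all_boot all_order all_algebra.
From mathcomp Require Import complex.
From mathcomp Require Import zify ring lra.
Set Implicit Arguments.
Unset Strict Implicit.
Unset Printing Implicit Defensive.
Import Order.TTheory GRing.Theory Num.Theory.

Lemma card_set_sum (T : finType) (P : pred T) : #|[set z | P z]| = \sum_z P z.
Proof. by rewrite -sum1_card big_mkcond; apply: eq_bigr => z _; rewrite inE. Qed.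

Lemma sum_enum_rank (T : finType) (V : nmodType) (F : 'I_#|T| -> V) :
  (\sum_i F i = \sum_u F (enum_rank u))%R.
Proof.
rewrite (big_enum_val (A := T) (fun u => F (enum_rank u))) /=.
by apply: eq_bigr => i _; rewrite enum_valK.
Qed.

Section Spectral.
Local Open Scope ring_scope.
Local Open Scope sesquilinear_scope.

Lemma hermitian_eigen_real (C : numClosedFieldType) n (A : 'M[C]_n) (r : 'rV_n) d :
  A^t* = A -> r != 0 -> r *m A = d *: r -> d \is Num.real.
Proof.
move=> hA r0 hr; have N_gt0 : 0 < (r *m r^t*) 0 0 by rewrite -dotmxE; exact: dotmx_is_dotmx.
have hAr : A *m r^t* = d^* *: r^t*.
  by rewrite -{1}hA -map_mxM -trmx_mul hr linearZ /= map_mxZ.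
have : d * (r *m r^t*) 0 0 = d^* * (r *m r^t*) 0 0.
  have := congr1 (fun M : 'M_1 => M 0 0) (mulmxA r A (r^t*)).
  by rewrite hr hAr -scalemxAl -scalemxAr !mxE.
move/(mulIf (lt0r_neq0 N_gt0)) => hd.
by rewrite CrealE -hd.
Qed.

Lemma normalmx_form_le (C : numClosedFieldType) n (A : 'M[C]_n) (g : 'rV_n) :
  A \is normalmx ->
  (forall (r : 'rV_n) d, r != 0 -> r *m A = d *: r -> g *m r^t* != 0 -> d <= 1) ->
  (g *m A *m g^t*) 0 0 <= (g *m g^t*) 0 0.
Proof.
move=> /orthomx_spectralP hA hle.
set P := spectralmx A in hA; set d := spectral_diag A in hA.
have P_unitary : P \is unitarymx := spectral_unitarymx A.
have P_inv : invmx P = P^t* := invmx_unitary P_unitary.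
pose h := g *m P^t*.
have h_adj : h^t* = P *m g^t* by rewrite /h trmx_mul map_mxM trmxCK.
have -> : g *m A *m g^t* = h *m diag_mx d *m h^t* by rewrite h_adj hA P_inv !mulmxA.
have -> : g *m g^t* = h *m h^t*.
  by rewrite h_adj /h -!mulmxA (mulmxA _ P) -P_inv mulVmx ?mul1mx // spectral_unit.
have h_row i : h 0 i = (g *m (row i P)^t*) 0 0.
  by rewrite !mxE; apply: eq_bigr => j _; rewrite !mxE.
clearbody h; rewrite mul_mx_diag !mxE; apply: ler_sum => i _; rewrite !mxE.
have [->|hi0] := eqVneq (h 0 i) 0; first by rewrite !mul0r.
suff : d 0 i <= 1.
  by move=> hd; rewrite mulrAC -[leRHS]mulr1 ler_wpM2l ?mul_conjC_ge0.
apply: (hle (row i P)).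
- rewrite rowE mulmx_free_eq0 ?row_free_unit ?spectral_unit //.
  by apply/eqP => /matrixP /(_ 0 i); rewrite !mxE !eqxx => /eqP; rewrite pnatr_eq0.
- rewrite -row_mul hA !mulmxA mulmxV ?spectral_unit // mul1mx.
  by rewrite row_mul row_diag_mx -scalemxAl -rowE.
- by apply: contra_neq hi0 => /matrixP /(_ 0 0); rewrite h_row => ->; rewrite mxE.
Qed.

Lemma conjC_real_complex (R : rcfType) (x : R) : (real_complex R x)^* = real_complex R x.
Proof. by rewrite conj_Creal // complex_real. Qed.

End Spectral.

Section Graph.
Variables (T : finType) (adj : rel T).
Hypothesis adj_sym : symmetric adj.
Hypothesis adj_irr : irreflexive adj.
Hypothesis adj_conn : connected_graph adj.
Local Notation within := (within adj).
Local Notation dist := (dist adj).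

Definition sphere x i := [set v | dist x v == i].

Lemma within_step n x z y : within n x z -> adj z y -> within n.+1 x y.
Proof. by move=> hxz hzy /=; apply/orP; right; apply/existsP; exists z; rewrite hxz. Qed.

Lemma within_mono m n x y : m <= n -> within m x y -> within n x y.
Proof.
move=> /subnK <-; elim: (n - m) => [|d IH] // hw.
by rewrite addSn /= IH.
Qed.

Lemma within_cons n x y w : adj x y -> within n y w -> within n.+1 x w.
Proof.
move=> hxy; elim: n w => [|n IH] w /=.
  by move=> /eqP <-; apply: (within_step (n := 0)) hxy => /=.
case/orP => [/IH /= -> //|/existsP [z /andP [/IH hz hzw]]].
exact: within_step hz hzw.
Qed.

Lemma within_sym n x y : within n x y -> within n y x.
Proof.
elim: n x y => [|n IH] x y /=; first by rewrite eq_sym.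
case/orP => [/IH -> //|/existsP [z /andP [/IH hz hzy]]].
by apply: within_cons hz; rewrite adj_sym.
Qed.

Lemma within_lt_card x y : exists2 n, n < #|T| & within n x y.
Proof.
have /connectP [p hp ->] := adj_conn x y.
have [q hq uq _] := shortenP hp.
exists (size q); first by have := card_uniqP uq => /= <-; exact: max_card.
elim: q x {hp} hq {uq} => [|z q IH] x /=; first by rewrite eqxx.
case/andP=> hxz /IH; exact: within_cons.
Qed.

Lemma has_within x y : has (fun n => within n x y) (iota 0 #|T|).
Proof. by have [n hn hw] := within_lt_card x y; apply/hasP; exists n; rewrite ?mem_iota. Qed.

Lemma dist_lt_card x y : dist x y < #|T|.
Proof. by rewrite /Defs.dist -[X in _ < X](size_iota 0 #|T|) -has_find has_within. Qed.

Lemma withinE m x y : within m x y = (dist x y <= m).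
Proof.
have dist_within : within (dist x y) x y.
  by have := nth_find 0 (has_within x y); rewrite nth_iota ?add0n ?dist_lt_card.
case: leqP => hm; first exact: within_mono dist_within.
have := before_find 0 hm; rewrite nth_iota ?add0n //.
exact: ltn_trans (dist_lt_card x y).
Qed.

Lemma dist_sym x y : dist x y = dist y x.
Proof.
by apply/eqP; rewrite eqn_leq -!withinE; apply/andP; split; apply: within_sym; rewrite withinE.
Qed.

Lemma dist_eq0 x y : (dist x y == 0) = (x == y).
Proof. by rewrite -leqn0 -withinE. Qed.

Lemma dist_eq1 x y : (dist x y == 1) = adj x y.
Proof.
have le1 : (dist x y <= 1) = (x == y) || adj x y.
  rewrite -withinE /=; congr (_ || _); apply/existsP/idP => [[z /andP [/eqP -> //]]|].
  by exists x; rewrite eqxx.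
have := dist_eq0 x y; case: eqVneq le1 => [-> _ /eqP -> |_ /= le1 /negbT];
  first by rewrite adj_irr.
by rewrite -le1; case: (dist x y) => [|[|]].
Qed.

Lemma leq_dist_adj x y z : adj y z -> dist x z <= (dist x y).+1.
Proof. by move=> hyz; rewrite -withinE; apply: within_step hyz; rewrite withinE. Qed.

Lemma dist_predP x y : 0 < dist x y -> exists2 z, adj z y & dist x z = (dist x y).-1.
Proof.
have := leqnn (dist x y); rewrite -withinE.
case hd: (dist x y) => [|n] //= /orP [hw|/existsP [z /andP [hz hzy]]] _.
  by move: hw; rewrite withinE hd ltnn.
exists z => //; apply/eqP; rewrite eqn_leq -withinE hz.
by have := leq_dist_adj x hzy; rewrite hd.
Qed.

Lemma dist_intermediate x y m : m <= dist x y -> exists w, dist x w = m.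
Proof.
move hd: (dist x y) => n; elim: n y hd => [|n IH] y hd hm.
  by exists y; rewrite hd; apply/eqP; rewrite eq_sym -leqn0.
case: (ltnP m n.+1) => hmn; last by exists y; lia.
have /dist_predP [z _] : 0 < dist x y by rewrite hd.
rewrite hd => hz.
exact: IH hz hmn.
Qed.

Lemma diameter_leq n : (forall x y, dist x y <= n) -> diameter adj <= n.
Proof. by move=> hn; apply/bigmax_leqP => x _; apply/bigmax_leqP => y _. Qed.

Lemma diameter_geq n : 0 < n <= diameter adj -> exists x y, dist x y = n.
Proof.
case/andP=> n_gt0 hn; have [/existsP [x /existsP [y hxy]]|/existsPn far] :=
  boolP [exists x, exists y, n <= dist x y].
  by have [w hw] := dist_intermediate hxy; exists x, w.
suff : diameter adj <= n.-1 by lia.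
by apply: diameter_leq => x y; move/existsPn: (far x) => /(_ y); rewrite -ltnNge; lia.
Qed.

Lemma odd_distE x v w :
  (forall u u', adj u u' -> odd (dist x u') = ~~ odd (dist x u)) ->
  odd (dist v w) = odd (dist x v) (+) odd (dist x w).
Proof.
move=> flip; move hd: (dist v w) => n; elim: n w hd => [|n IH] w hd.
  by move/eqP: hd; rewrite dist_eq0 => /eqP ->; rewrite addbb.
have /dist_predP [z hzw] : 0 < dist v w by rewrite hd.
by rewrite hd /= => /IH ->; rewrite (flip _ _ hzw) addbN.
Qed.

Definition quad_form_le_norm (R : numDomainType) := forall f : T -> R,
  (\sum_u f u = 0 -> \sum_u \sum_v (adj u v)%:R * f u * f v <= \sum_u f u ^+ 2)%R.

Lemma double_count (A B : pred T) :
  \sum_(u | A u) #|[set v | adj u v & B v]| =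
  \sum_(v | B v) #|[set u | adj v u & A u]|.
Proof.
have edges (P Q : pred T) : \sum_(u | P u) #|[set v | adj u v & Q v]| =
    \sum_u \sum_v (P u && adj u v && Q v : nat).
  rewrite big_mkcond; apply: eq_bigr => u _; rewrite card_set_sum.
  by case: (P u) => //=; rewrite big1.
rewrite !edges exchange_big; apply: eq_bigr => v _; apply: eq_bigr => u _.
by rewrite (adj_sym u v); case: (A u); case: (B v); rewrite ?andbF ?andbT.
Qed.

Section Regular.
Variable k : nat.
Hypothesis adj_regular : forall x, #|[set y | adj x y]| = k.
Local Open Scope ring_scope.
Local Open Scope sesquilinear_scope.

Lemma sum_adj (V : pzSemiRingType) x : \sum_y (adj x y)%:R = k%:R :> V.
Proof. by rewrite -(adj_regular x) card_set_sum natr_sum. Qed.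

Lemma regular_energy_eq0 (C : numClosedFieldType) (v : T -> C) :
  (forall x, \sum_y (adj x y)%:R * v y = k%:R * v x) ->
  \sum_x \sum_y (adj x y)%:R * ((v x - v y) * (v x - v y)^*) = 0.
Proof.
move=> hv; pose F x := v x * (v x)^*.
have S1 : \sum_x \sum_y (adj x y)%:R * F x = \sum_x k%:R * F x.
  by apply: eq_bigr => x _; rewrite -mulr_suml sum_adj.
have S2 : \sum_x \sum_y (adj x y)%:R * F y = \sum_x k%:R * F x.
  rewrite exchange_big -S1; apply: eq_bigr => x _.
  by apply: eq_bigr => y _; rewrite adj_sym.
have S3 : \sum_x \sum_y (adj x y)%:R * (v x * (v y)^*) = \sum_x k%:R * F x.
  apply: eq_bigr => x _.
  have -> : k%:R * F x = v x * (k%:R * v x)^* by rewrite /F rmorphM rmorph_nat; ring.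
  rewrite -hv rmorph_sum mulr_sumr.
  by apply: eq_bigr => y _; rewrite rmorphM rmorph_nat; ring.
have S4 : \sum_x \sum_y (adj x y)%:R * (v y * (v x)^*) = \sum_x k%:R * F x.
  apply: eq_bigr => x _; rewrite /F mulrA -hv mulr_suml.
  by apply: eq_bigr => y _; ring.
transitivity (\sum_x \sum_y (adj x y)%:R * F x + \sum_x \sum_y (adj x y)%:R * F y
  - \sum_x \sum_y (adj x y)%:R * (v x * (v y)^*)
  - \sum_x \sum_y (adj x y)%:R * (v y * (v x)^*)); last by rewrite S1 S2 S3 S4; ring.
rewrite -big_split -!sumrB /=; apply: eq_bigr => x _.
rewrite -big_split -!sumrB /=; apply: eq_bigr => y _.
by rewrite /F rmorphB /=; ring.
Qed.

Lemma regular_eigenfun_const (C : numClosedFieldType) (v : T -> C) :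
  (forall x, \sum_y (adj x y)%:R * v y = k%:R * v x) -> forall x y, v x = v y.
Proof.
move=> /regular_energy_eq0 energy0.
have term_ge0 x y : 0 <= (adj x y)%:R * ((v x - v y) * (v x - v y)^*).
  by rewrite mulr_ge0 ?ler0n ?mul_conjC_ge0.
have edge_eq x y : adj x y -> v x = v y.
  have row0 := psumr_eq0P (fun u _ => sumr_ge0 _ (fun w _ => term_ge0 u w)) energy0.
  have := psumr_eq0P (fun w _ => term_ge0 x w) (row0 x isT) (i := y) isT.
  by move=> /eqP + hxy; rewrite hxy mul1r mul_conjC_eq0 subr_eq0 => /eqP.
move=> x y; apply/eqP; rewrite -[_ == _]/(y \in [pred z | v x == v z]).
rewrite -(closed_connect _ (adj_conn x y)) ?inE // => u w /edge_eq.
by rewrite !inE => ->.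
Qed.

Section Spectrum.
Variable R : rcfType.
Hypothesis nontrivial_eigen_le1 :
  forall theta : R, eigenvalue (adjmx adj R) theta -> theta != k%:R -> theta <= 1.
Local Notation C := R[i].
Local Notation A := (adjmx adj C).

Lemma adjmx_conj : A^t* = A.
Proof. by apply/matrixP => i j; rewrite !mxE conjC_nat adj_sym. Qed.

Lemma eigenvalue_adjmx_real (x : R) :
  eigenvalue A (real_complex R x) -> eigenvalue (adjmx adj R) x.
Proof.
have -> : A = (adjmx adj R) ^ (real_complex R).
  by apply/matrixP => i j; rewrite !mxE rmorph_nat.
by rewrite !eigenvalue_root_char -map_char_poly fmorph_root.
Qed.

Lemma adjmx_eigenrow_const (r : 'rV[C]_#|T|) :
  r *m A = k%:R *: r -> forall i j, r 0 i = r 0 j.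
Proof.
move=> hr i j; rewrite -(enum_valK i) -(enum_valK j).
apply: (@regular_eigenfun_const _ (fun u => r 0 (enum_rank u))).
move=> x; move/matrixP: hr => /(_ 0 (enum_rank x)); rewrite !mxE sum_enum_rank => <-.
by apply: eq_bigr => y _; rewrite !mxE !enum_rankK adj_sym mulrC.
Qed.

Lemma adjacency_form_le : quad_form_le_norm R.
Proof.
move=> f f_sum0; pose g : 'rV[C]_#|T| := \row_j real_complex R (f (enum_val j)).
have formE : (g *m A *m g^t*) 0 0 = real_complex R (\sum_u \sum_v (adj u v)%:R * f u * f v).
  rewrite !mxE sum_enum_rank rmorph_sum; apply: eq_bigr => u _.
  rewrite !mxE sum_enum_rank rmorph_sum mulr_suml; apply: eq_bigr => v _.
  rewrite !mxE !enum_rankK conjC_real_complex !rmorphM rmorph_nat /= (adj_sym v u).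
  ring.
have normE : (g *m g^t*) 0 0 = real_complex R (\sum_u f u ^+ 2).
  rewrite !mxE sum_enum_rank rmorph_sum; apply: eq_bigr => u _.
  by rewrite !mxE !enum_rankK conjC_real_complex rmorphXn expr2.
rewrite -lecR -formE -normE; apply: normalmx_form_le => [|r d r0 hr gr0].
  by apply/normalmxP; rewrite adjmx_conj.
have d_real : d \is Num.real := hermitian_eigen_real adjmx_conj r0 hr.
rewrite -(RRe_real d_real) -(rmorph1 (real_complex R)) lecR.
apply: nontrivial_eigen_le1.
  by rewrite eigenvalue_adjmx_real // RRe_real //; apply/eigenvalueP; exists r.
(* An eigenvector for k is constant, hence orthogonal to g. *)
apply: contra_neq gr0 => dk; rewrite -(RRe_real d_real) dk rmorph_nat in hr.
have r_const := adjmx_eigenrow_const hr.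
apply/matrixP => ? ?; rewrite !ord1 !mxE.
have [i0 _|no_index] := pickP (@predT 'I_#|T|); last by rewrite big_pred0.
under eq_bigr => j _ do rewrite !mxE (r_const j i0).
by rewrite -mulr_suml -rmorph_sum -(big_enum_val (A := T) f) /= f_sum0 rmorph0 mul0r.
Qed.
End Spectrum.
End Regular.

Definition adj_form (F G : T -> nat) := \sum_u \sum_v adj u v * F u * G v.

Lemma adj_formC F G : adj_form F G = adj_form G F.
Proof.
rewrite /adj_form exchange_big; apply: eq_bigr => u _; apply: eq_bigr => v _.
by rewrite adj_sym mulnAC mulnC mulnA.
Qed.

Section FormBound.
Local Open Scope ring_scope.
Variable R : realDomainType.
Hypothesis form_le : quad_form_le_norm R.

Lemma adj_form_diff_le (F G : T -> nat) : (\sum_u F u = \sum_u G u)%N ->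
  (adj_form F F + adj_form G G + 2 * \sum_u F u * G u <=
   \sum_u F u ^ 2 + \sum_u G u ^ 2 + 2 * adj_form F G)%N.
Proof.
move=> sumFG; pose f u : R := (F u)%:R - (G u)%:R.
have := @form_le f; rewrite sumrB -!natr_sum sumFG subrr => /(_ erefl).
have -> : \sum_u \sum_v (adj u v)%:R * f u * f v = (adj_form F F)%:R
    - (adj_form F G)%:R - (adj_form G F)%:R + (adj_form G G)%:R :> R.
  rewrite /adj_form !natr_sum -!sumrB -big_split /=; apply: eq_bigr => u _.
  rewrite !natr_sum -!sumrB -big_split /=; apply: eq_bigr => v _.
  by rewrite /f !natrM; ring.
have -> : \sum_u f u ^+ 2 = (\sum_u F u ^ 2)%N%:R + (\sum_u G u ^ 2)%N%:R
    - 2 * (\sum_u F u * G u)%N%:R :> R.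
  rewrite !natr_sum mulr_sumr -big_split -sumrB /=; apply: eq_bigr => u _.
  by rewrite /f !natrX natrM; ring.
rewrite (adj_formC G F) -(ler_nat R) !natrD => h.
lra.
Qed.
End FormBound.

Section DistanceRegular.
Variables b c : nat -> nat.
Hypothesis adj_dr : distance_regular adj b c.
Local Notation k := (b 0).

(* The intersection number a_i; the truncated subtraction is exact whenever distance i
   occurs, see [intersection_sum]. *)
Definition isect_a i := k - (c i + b i).

Lemma adj_regular y : #|[set z | adj y z]| = k.
Proof.
have [_] := adj_dr y y; have /eqP -> : dist y y == 0 by rewrite dist_eq0.
by move=> <-; apply: eq_card => z; rewrite !inE dist_eq1 andbb.
Qed.

Lemma card_adj_partition x y :
  c (dist x y) + #|[set z | adj y z & dist x z == dist x y]| + b (dist x y) = k.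
Proof.
have [<- <-] := adj_dr x y; rewrite -(adj_regular y) !card_set_sum -!big_split /=.
apply: eq_bigr => z _; case hyz: (adj y z) => //=.
have := leq_dist_adj x hyz; rewrite adj_sym in hyz; have := leq_dist_adj x hyz.
lia.
Qed.

Lemma card_adj_level x y :
  #|[set z | adj y z & dist x z == dist x y]| = isect_a (dist x y).
Proof. by have := card_adj_partition x y; rewrite /isect_a; lia. Qed.

Lemma intersection_sum x y : c (dist x y) + isect_a (dist x y) + b (dist x y) = k.
Proof. by rewrite -card_adj_level card_adj_partition. Qed.

Lemma c1_eq1 x y : adj x y -> c 1 = 1.
Proof.
rewrite -dist_eq1 => /eqP hxy; have [] := adj_dr x y; rewrite hxy => <- _.
rewrite -[RHS](cards1 x); apply: eq_card => z; rewrite !inE addn1 eqSS dist_eq0 eq_sym.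
by case: eqP => [->|] //=; rewrite ?andbT ?andbF // adj_sym -dist_eq1 hxy.
Qed.

Lemma b_gt0 x y i : i < dist x y -> 0 < b i.
Proof.
move=> /dist_intermediate [w hw]; have /dist_predP [z hzw] : 0 < dist x w by rewrite hw.
rewrite hw /= => hz; have [_] := adj_dr x z; rewrite hz => <-; apply/card_gt0P; exists w.
by rewrite inE hzw hw eqxx.
Qed.

Lemma dist_leq_b_eq0 {i} : b i = 0 -> forall x y, dist x y <= i.
Proof. by move=> bi0 x y; rewrite leqNgt; apply/negP => /b_gt0; rewrite bi0. Qed.

Lemma card_sphere_succ x i : #|sphere x i| * b i = #|sphere x i.+1| * c i.+1.
Proof.
have := double_count (fun u => u \in sphere x i) (fun v => v \in sphere x i.+1).
rewrite (eq_bigr (fun _ => b i)) => [|u]; last first.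
  rewrite inE => /eqP hu; rewrite -hu -(adj_dr x u).2.
  by apply: eq_card => v; rewrite !inE.
rewrite [RHS](eq_bigr (fun _ => c i.+1)) => [|v]; last first.
  rewrite inE => /eqP hv; rewrite -hv -(adj_dr x v).1 hv.
  by apply: eq_card => u; rewrite !inE addn1 eqSS.
by rewrite !sum_nat_const.
Qed.

Lemma card_sphere0 p : #|sphere p 0| = 1.
Proof. by rewrite -(cards1 p); apply: eq_card => v; rewrite !inE dist_eq0 eq_sym. Qed.

Lemma card_sphere1 p : #|sphere p 1| = k.
Proof. by rewrite -(adj_regular p); apply: eq_card => v; rewrite !inE dist_eq1. Qed.

Definition star p u := k * (u == p) + adj p u.

Definition ncommon u q := #|[set v | adj u v & adj q v]|.

Lemma adj_form_star p q : adj_form (star p) (star q) =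
  k * (k * adj p q + ncommon p q) + \sum_u adj p u * (k * adj u q + ncommon u q).
Proof.
have row_star u : \sum_v adj u v * star q v = k * adj u q + ncommon u q.
  rewrite /star /ncommon card_set_sum; under eq_bigr do rewrite mulnDr.
  rewrite big_split /= (bigD1 q) //= eqxx big1 => [|v /negbTE ->]; last by rewrite !muln0.
  by rewrite muln1 addn0 mulnC; congr (_ + _); apply: eq_bigr => v _; rewrite mulnb.
transitivity (\sum_u star p u * (k * adj u q + ncommon u q)).
  apply: eq_bigr => u _; rewrite -row_star big_distrr; apply: eq_bigr => v _.
  by rewrite /= mulnA [adj u v * _]mulnC.
rewrite /star; under eq_bigr do rewrite mulnDl.
rewrite big_split /= (bigD1 p) //= eqxx big1 => [|u /negbTE ->]; last by rewrite muln0 mul0n.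
by rewrite muln1 addn0.
Qed.

Lemma ncommon_dist u x : ncommon u x = #|[set v | adj u v & dist x v == 1]|.
Proof. by apply: eq_card => v; rewrite !inE dist_eq1. Qed.

Lemma adj_form_star_self p : adj_form (star p) (star p) = 2 * k ^ 2 + k * isect_a 1.
Proof.
rewrite adj_form_star adj_irr.
have -> : ncommon p p = k by rewrite -(adj_regular p); apply: eq_card => v; rewrite !inE andbb.
rewrite (eq_bigr (fun u => adj p u * (k + isect_a 1))) => [|u _].
  by rewrite -big_distrl -card_set_sum adj_regular /=; lia.
case hpu: (adj p u); rewrite ?mul0n // !mul1n adj_sym hpu muln1.
by rewrite ncommon_dist -dist_eq1 in hpu *; move/eqP: hpu => <-; rewrite -card_adj_level.
Qed.

Lemma ncommon_far u x : 2 <= dist x u -> ncommon u x = (dist x u == 2) * c 2.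
Proof.
move=> hu; rewrite ncommon_dist; case: eqVneq => [hu2|hu2].
  by rewrite mul1n -hu2 -(adj_dr x u).1 hu2; apply: eq_card => v; rewrite !inE addn1 eqSS.
apply: eq_card0 => v; rewrite !inE; apply/negP => /andP [huv /eqP hv].
by have := leq_dist_adj x (etrans (adj_sym v u) huv); rewrite hv; lia.
Qed.

Lemma adj_form_star_far x w : dist x w = 3 -> adj_form (star w) (star x) = c 2 * c 3.
Proof.
move=> hxw; rewrite adj_form_star ncommon_far hxw //.
have -> : adj w x = false by rewrite -dist_eq1 dist_sym hxw.
rewrite muln0 (eq_bigr (fun u => (adj w u && (dist x u + 1 == 3)) * c 2)) => [|u _].
  have [h _] := adj_dr x w; rewrite hxw in h.
  by rewrite -big_distrl -card_set_sum h /=; nia.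
case hwu: (adj w u) => //=; rewrite mul1n.
have hu : 2 <= dist x u by have := leq_dist_adj x (etrans (adj_sym u w) hwu); lia.
have -> : adj u x = false by rewrite -dist_eq1 dist_sym; lia.
by rewrite ncommon_far // addn1 eqSS muln0.
Qed.

Lemma sum_star p : \sum_u star p u = 2 * k.
Proof.
rewrite big_split /= -big_distrr /= (bigD1 p) //= eqxx big1 => [|u /negbTE -> //].
by rewrite -card_set_sum adj_regular; lia.
Qed.

Lemma sum_star_sq p : \sum_u star p u ^ 2 = k ^ 2 + k.
Proof.
rewrite (bigD1 p) //= /star eqxx adj_irr muln1 addn0; congr (_ + _).
rewrite -[RHS](adj_regular p) card_set_sum [RHS](bigD1 p) //= adj_irr add0n.
by apply: eq_bigr => u /negbTE ->; rewrite muln0; case: (adj p u).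
Qed.

Lemma star_far_mul x w u : dist x w = 3 -> star x u * star w u = 0.
Proof.
move=> hxw; have xw : x != w by rewrite -dist_eq0 hxw.
have adj_xw : adj x w = false by rewrite -dist_eq1 hxw.
have no_common : adj w u && adj x u = false.
  apply/negbTE/negP => hu; have /ncommon_far : 2 <= dist x w by rewrite hxw.
  by rewrite hxw => /eqP; rewrite cards_eq0 => /eqP/setP/(_ u); rewrite !inE hu.
rewrite /star; case: (eqVneq u x) => [->|ux].
  by rewrite (negbTE xw) adj_sym adj_xw muln0 addn0 muln0.
case: (eqVneq u w) => [->|uw]; first by rewrite adj_xw muln0.
by move: no_common; rewrite !muln0 !add0n; case: (adj x u); case: (adj w u).
Qed.

Section SpectralBound.
Variable R : realDomainType.
Hypothesis form_le : quad_form_le_norm R.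

Lemma star_bound x w : dist x w = 3 -> k ^ 2 + k * isect_a 1 <= k + c 2 * c 3.
Proof.
move=> hxw; have := adj_form_diff_le form_le (etrans (sum_star x) (esym (sum_star w))).
rewrite !adj_form_star_self adj_formC adj_form_star_far // !sum_star_sq.
rewrite big1 => [|u _]; last exact: star_far_mul.
lia.
Qed.

Lemma intersection_array x w : 1 < k -> dist x w = 3 ->
  [/\ b 1 = k.-1, b 2 = 1, b 3 = 0, c 2 = k.-1 & c 3 = k].
Proof.
move=> hk hxw; have bound := star_bound hxw.
have /dist_intermediate [x1 hx1] : 1 <= dist x w by rewrite hxw.
have /dist_intermediate [x2 hx2] : 2 <= dist x w by rewrite hxw.
have := intersection_sum x x1; have := intersection_sum x x2; have := intersection_sum x w.
rewrite hx1 hx2 hxw => sum3 sum2 sum1.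
have /c1_eq1 c1 : adj x x1 by rewrite -dist_eq1 hx1.
have /b_gt0 b2 : 2 < dist x w by rewrite hxw.
have c2c3 : c 2 * c 3 <= k.-1 * k by apply: leq_mul; lia.
have a1 : isect_a 1 = 0 by nia.
have c3 : c 3 = k by apply/eqP; rewrite eqn_leq; apply/andP; split; nia.
split; nia.
Qed.
End SpectralBound.

Section Crown.
Hypothesis k_gt1 : 1 < k.
Hypotheses (b1 : b 1 = k.-1) (b2 : b 2 = 1) (b3 : b 3 = 0).
Hypotheses (c2 : c 2 = k.-1) (c3 : c 3 = k).

Lemma odd_dist_flip p u v : adj u v -> odd (dist p v) = ~~ odd (dist p u).
Proof.
move=> huv; have c1 := c1_eq1 huv.
have no_level : #|[set z | adj u z & dist p z == dist p u]| = 0.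
  rewrite card_adj_level /isect_a; have := dist_leq_b_eq0 b3 p u.
  by case: (dist p u) => [|[|[|[|i]]]] //= _; rewrite ?c1 ?b1 ?b2 ?b3 ?c2 ?c3; lia.
have neq : dist p v <> dist p u.
  move=> heq; move/eqP: no_level; rewrite cards_eq0 => /eqP/setP/(_ v).
  by rewrite !inE huv heq eqxx.
have le_vu := leq_dist_adj p huv; have le_uv := leq_dist_adj p (etrans (adj_sym v u) huv).
have : dist p v = (dist p u).+1 \/ dist p u = (dist p v).+1 by lia.
by case=> ->; rewrite /= ?negbK.
Qed.

Lemma card_sphere2 p : #|sphere p 2| = k.
Proof.
have := card_sphere_succ p 1; rewrite card_sphere1 b1 c2 => /eqP.
by rewrite eqn_pmul2r; [rewrite eq_sym => /eqP | lia].
Qed.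

Lemma card_sphere3 p : #|sphere p 3| = 1.
Proof.
have := card_sphere_succ p 2; rewrite card_sphere2 b2 c3 muln1 => /eqP.
by rewrite -{1}[k]mul1n eqn_pmul2r; [rewrite eq_sym => /eqP | lia].
Qed.

Definition antipode v := odflt v [pick w | dist v w == 3].

Lemma antipode_spec v w : (dist v w == 3) = (w == antipode v).
Proof.
have /cards1P [a ha] := introT eqP (card_sphere3 v).
have sphere3E u : (dist v u == 3) = (u == a) by rewrite -in_set1 -ha inE.
rewrite sphere3E /antipode; case: pickP => [a' | /(_ a)]; last by rewrite sphere3E eqxx.
by rewrite sphere3E => /eqP ->.
Qed.

Lemma dist_antipode v : dist v (antipode v) = 3.
Proof. by apply/eqP; rewrite antipode_spec. Qed.

Lemma antipodeK : involutive antipode.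
Proof. by move=> v; apply/eqP; rewrite eq_sym -antipode_spec dist_sym dist_antipode. Qed.

Lemma adjE v w : adj v w = odd (dist v w) && (w != antipode v).
Proof.
rewrite -dist_eq1 -antipode_spec.
by have := dist_leq_b_eq0 b3 v w; case: (dist v w) => [|[|[|[|]]]].
Qed.

Variable x : T.
Local Notation side v := (odd (dist x v)).

Lemma odd_dist_side v w : odd (dist v w) = side v (+) side w.
Proof. exact: odd_distE v w (odd_dist_flip x). Qed.

Lemma side_antipode v : side (antipode v) = ~~ side v.
Proof.
by have := odd_dist_side v (antipode v); rewrite dist_antipode; case: (side v); case: (side _).
Qed.

Definition even_rep v := if side v then antipode v else v.

Lemma side_even_rep v : side (even_rep v) = false.
Proof. by rewrite /even_rep; case: ifP => [hv|->]; rewrite ?side_antipode ?hv. Qed.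

Lemma even_rep_eq v w : side v != side w -> (even_rep v == even_rep w) = (w == antipode v).
Proof.
rewrite /even_rep; case: (side v); case: (side w) => // _.
by rewrite eq_sym (inv_eq antipodeK).
Qed.

Lemma card_even : #|[set v | ~~ side v]| = k.+1.
Proof.
have -> : [set v | ~~ side v] = sphere x 0 :|: sphere x 2.
  apply/setP => v; rewrite !inE.
  by have := dist_leq_b_eq0 b3 x v; case: (dist x v) => [|[|[|[|]]]].
rewrite cardsU card_sphere0 card_sphere2 (_ : _ :&: _ = set0) ?cards0 ?subn0 //.
by apply/setP => v; rewrite !inE; case: (dist x v) => [|[|[|]]].
Qed.

Lemma even_base : x \in [set v | ~~ side v].
Proof. by rewrite inE; have /eqP -> : dist x x == 0 by rewrite dist_eq0. Qed.

(* An antipodal class is indexed by its member at even distance from x. *)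
Definition crown_map v : 'I_k.+1 * bool :=
  (cast_ord card_even (enum_rank_in even_base (even_rep v)), side v).

Definition crown_inv (p : 'I_k.+1 * bool) : T :=
  let v := enum_val (cast_ord (esym card_even) p.1) in
  if p.2 then antipode v else v.

Lemma even_rep_in v : even_rep v \in [set u | ~~ side u].
Proof. by rewrite inE side_even_rep. Qed.

Lemma crown_mapK : cancel crown_map crown_inv.
Proof.
move=> v; rewrite /crown_inv /= cast_ordK enum_rankK_in ?even_rep_in //.
by rewrite /even_rep; case: (side v); rewrite ?antipodeK.
Qed.

Lemma crown_invK : cancel crown_inv crown_map.
Proof.
case=> i s; rewrite /crown_inv /=; set v := enum_val _.
have v_even : v \in [set u | ~~ side u] := enum_valP _.
have side_v : side v = false by move: v_even; rewrite inE => /negbTE.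
rewrite /crown_map.
have -> : even_rep (if s then antipode v else v) = v.
  by rewrite /even_rep; case: s; rewrite ?side_antipode side_v ?antipodeK.
by rewrite enum_valK_in cast_ordKV; case: s; rewrite ?side_antipode side_v.
Qed.

Lemma crown_map_adj v w : crown k.+1 (crown_map v) (crown_map w) = adj v w.
Proof.
rewrite /crown /= adjE (odd_dist_side v w).
have -> : side v (+) side w = (side v != side w) by case: (side v); case: (side w).
case: eqVneq => //= side_vw.
rewrite (inj_eq (cast_ord_inj (eq_n := card_even))).
rewrite (inj_in_eq (enum_rank_in_inj (Ax0 := even_base) (Ay0 := even_base))) ?even_rep_in //.
by rewrite even_rep_eq // side_vw.
Qed.

Lemma crown_iso : graph_iso adj (crown k.+1).
Proof.
exists crown_map; split; last exact: crown_map_adj.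
exact: Bijective crown_mapK crown_invK.
Qed.

End Crown.


End DistanceRegular.

End Graph.

Local Open Scope ring_scope.

Theorem theorem4p1 (R : rcfType) (T : finType) (adj : rel T) (b c : nat -> nat) :
  simple_graph adj -> connected_graph adj ->
  distance_regular adj b c ->
  (3 <= b 0%N)%N -> (3 <= diameter adj)%N ->
  (forall theta : R, eigenvalue (adjmx adj R) theta ->
     theta != (b 0%N)%:R -> theta <= 1) ->
  diameter adj = 3%N /\ graph_iso adj (crown (b 0%N).+1).
Proof.
move=> [adj_sym adj_irr] adj_conn adj_dr k_ge3 diam_ge3 eig_le1.
have regular := adj_regular adj_irr adj_conn adj_dr.
have form_le := adjacency_form_le adj_sym adj_conn regular eig_le1.
have [|x [w hxw]] := diameter_geq adj_conn (n := 3); first by rewrite diam_ge3.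
have k_gt1 : (1 < b 0)%N by rewrite ltnW.
have [b1 b2 b3 c2 c3] := intersection_array adj_sym adj_irr adj_conn adj_dr form_le k_gt1 hxw.
split; last exact (crown_iso adj_sym adj_irr adj_conn adj_dr k_gt1 b1 b2 b3 c2 c3 x).
apply/eqP; rewrite eqn_leq diam_ge3 andbT.
exact/diameter_leq/(dist_leq_b_eq0 adj_conn adj_dr b3).
Qed.
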